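(* Let $\mu,\kappa>0$ and consider the energy $W(B_e)=\frac{\mu}{2}\Big(\mathrm{tr}\frac{B_e}{(\det B_e)^{1/3}}-3\Big)+\frac{\kappa}{4}\big[(\det B_e-1)-\log\det B_e\big]$ with $B_e=F_eF_e^T$, $F_e\in\mathrm{GL}^+(3)$, and let $\tau_e$ be the associated Kirchhoff stress, whose deviatoric part is $\mathrm{dev}_3\tau_e=\mu\,\mathrm{dev}_3\big(B_e/(\det B_e)^{1/3}\big)$. Then $$\big\langle F_e^{-1}(\mathrm{dev}_3\tau_e)F_e^{-T},\mathbb{1}\big\rangle=\frac{\mu}{(\det B_e)^{4/3}}\Big[3\det B_e-\frac13\,\mathrm{tr}(B_e)\,\mathrm{tr}(\mathrm{Cof}\,B_e)\Big],$$ and this quantity vanishes if and only if $B_e$ is a positive multiple of $\mathbb{1}$, i.e. if and only if $F_e\in\mathbb{R}_+\cdot\mathrm{SO}(3)$. In particular, the right-hand side of the Simo–Hughes flow rule $\frac{d}{dt}[\overline C_p^{-1}]=-\frac23\lambda\,\mathrm{tr}(B_e)\,F^{-1}\frac{\mathrm{dev}_3\tau_e}{\|\mathrm{dev}_3\tau_e\|}F^{-T}$ ($\overline C_p=C_p/(\det C_p)^{1/3}$, $\lambda>0$) in general yields $\frac{d}{dt}\det\overline C_p^{-1}\neq0$.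
   Context: $\langle X,Y\rangle=\mathrm{tr}(XY^T)$, $\|\cdot\|$ Frobenius norm, $\mathrm{dev}_3X=X-\frac13\mathrm{tr}(X)\mathbb{1}$, $\mathrm{Cof}\,X=(\det X)X^{-T}$. Kinematics: $F\in\mathrm{GL}^+(3)$, $F_p\in\mathrm{GL}^+(3)$, $F_e=FF_p^{-1}$, $C_p=F_p^TF_p$; the derivative of $\det\overline C_p^{-1}$ along the flow is $\det\overline C_p^{-1}\langle\mathbb{1},\frac{d}{dt}[\overline C_p^{-1}]\overline C_p\rangle$. *)

From HB Require Import structures.
From mathcomp Require Import all_boot all_order all_algebra.
Set Implicit Arguments. Unset Strict Implicit. Unset Printing Implicit Defensive.
Import Order.TTheory GRing.Theory Num.Theory.
Local Open Scope ring_scope.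

Section Defs.
Variable R : rcfType.

Fact cbrt_subproof (x : R) :
  exists2 y, 0 <= y & (if 0 <= x then y ^+ 3 == x else y == 0) : bool.
Proof.
case x_ge0: (0 <= x); last by exists 0.
have le0x1: 0 <= x + 1 by rewrite -nnegrE rpredD ?rpred1.
have [|y /andP[y_ge0 _]] := @poly_ivt R ('X^3 - x%:P) _ _ le0x1.
  rewrite !hornerE expr0n /= sub0r oppr_le0 x_ge0 /= subr_ge0.
  have h1 : 1 <= x + 1 by rewrite lerDr.
  apply: (@le_trans _ _ (x + 1)); first by rewrite lerDl ler01.
  by rewrite -{1}(expr1 (x + 1)) ler_eXnr.
by rewrite rootE !hornerE subr_eq0; exists y.
Qed.

Definition cbrt (x : R) : R := s2val (sig2W (cbrt_subproof x)).

Definition minner (X Y : 'M[R]_3) : R := \tr (X *m Y^T).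
Definition mnorm (X : 'M[R]_3) : R := Num.sqrt (minner X X).

Definition dev3 (X : 'M[R]_3) : 'M[R]_3 := X - (\tr X / 3%:R) *: 1%:M.

Definition cof (X : 'M[R]_3) : 'M[R]_3 := \det X *: (invmx X)^T.

Definition GLp (F : 'M[R]_3) : Prop := F \in unitmx /\ 0 < \det F.

Definition SO3 (Q : 'M[R]_3) : Prop := Q^T *m Q = 1%:M /\ \det Q = 1.

(* Kirchhoff stress of the energy
   W(B) = mu/2 (tr(B/(det B)^(1/3)) - 3) + kappa/4 ((det B - 1) - log det B):
   tau = mu dev_3(B/(det B)^(1/3)) + kappa/2 (det B - 1) 1. *)
Definition kirchhoff (mu kappa : R) (B : 'M[R]_3) : 'M[R]_3 :=
  mu *: dev3 ((cbrt (\det B))^-1 *: B) + (kappa / 2%:R * (\det B - 1)) *: 1%:M.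

End Defs.

From HB Require Import structures.
From mathcomp Require Import all_boot all_order all_algebra.
From mathcomp Require Import ring.
Import Order.TTheory GRing.Theory Num.Theory.
Local Open Scope ring_scope.
Set Implicit Arguments. Unset Strict Implicit.

(** Writing [B = F F^T], conjugation moves the pulled-back stress into
    [<F^-1 X F^-T, 1> = tr (X B^-1)], and for the deviatoric part
    [tr (dev_3 B . B^-1) = 3 - tr B tr B^-1 / 3].  Since [tr B = <F, F>],
    [tr B^-1 = <F^-T, F^-T>] and [<F, F^-T> = 3], the Cauchy-Schwarz
    inequality gives [tr B tr B^-1 >= 9], with equality exactly when [F^-T]
    is proportional to [F], i.e. when [B] is a positive multiple of the
    identity.  In the flow rule, [d/dt det Cpbar^-1] is a nonzero multiple of
    the same trace [tr (dev_3 tau_e . B_e^-1)]. *)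

Lemma invmxM (R : comUnitRingType) n (A B : 'M[R]_n) :
  A \in unitmx -> B \in unitmx -> invmx (A *m B) = invmx B *m invmx A.
Proof.
move=> uA uB; have uAB : A *m B \in unitmx by rewrite unitmx_mul uA uB.
have inv_left : invmx B *m invmx A *m (A *m B) = 1%:M.
  by rewrite -mulmxA (mulmxA (invmx A)) mulVmx // mul1mx mulVmx.
by rewrite -[LHS]mul1mx -inv_left -mulmxA mulmxV ?mulmx1.
Qed.

Lemma invmx_gram (R : comUnitRingType) n (F : 'M[R]_n) :
  F \in unitmx -> invmx (F *m F^T) = (invmx F)^T *m invmx F.
Proof. by move=> uF; rewrite invmxM ?unitmx_tr // trmx_inv. Qed.

Section Mat3.
Variable R : rcfType.
Implicit Types (F G X B Q : 'M[R]_3) (a s t : R).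

Lemma minnerE F G : minner F G = \sum_i \sum_j F i j * G i j.
Proof.
rewrite /minner /mxtrace; apply: eq_bigr => i _; rewrite !mxE.
by apply: eq_bigr => j _; rewrite mxE.
Qed.

Lemma minner1r X : minner X 1%:M = \tr X.
Proof. by rewrite /minner trmx1 mulmx1. Qed.

Lemma minner1l X : minner 1%:M X = \tr X.
Proof. by rewrite /minner mul1mx mxtrace_tr. Qed.

Lemma minner_self_ge0 F : 0 <= minner F F.
Proof.
rewrite minnerE sumr_ge0 // => i _.
by rewrite sumr_ge0 // => j _; rewrite -expr2 sqr_ge0.
Qed.

Lemma minner_self_eq0 F : (minner F F == 0) = (F == 0).
Proof.
apply/idP/eqP => [|->]; last by rewrite /minner mul0mx mxtrace0.
rewrite minnerE => /eqP sum0; apply/matrixP => i j; rewrite mxE.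
have sq_ge0 i' j' : 0 <= F i' j' * F i' j' by rewrite -expr2 sqr_ge0.
have row0 := psumr_eq0P (fun i' _ => sumr_ge0 _ (fun j' _ => sq_ge0 i' j')) sum0 (i := i) isT.
have := psumr_eq0P (fun j' _ => sq_ge0 i j') row0 (i := j) isT.
by move=> /eqP; rewrite mulf_eq0 orbb => /eqP.
Qed.

Lemma minner_self_gt0 F : (0 < minner F F) = (F != 0).
Proof. by rewrite lt_def minner_self_ge0 andbT minner_self_eq0. Qed.

Lemma mnorm_gt0 X : (0 < mnorm X) = (X != 0).
Proof. by rewrite /mnorm sqrtr_gt0 minner_self_gt0. Qed.

Lemma minner_normZB s F G :
  minner (s *: F - G) (s *: F - G)
  = s ^+ 2 * minner F F - 2%:R * s * minner F G + minner G G.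
Proof. by rewrite !minnerE !big_ord_recr !big_ord0 /= !mxE; ring. Qed.

(* The defect [|F|^2 |G|^2 - <F,G>^2] equals [|F|^2 |sF - G|^2] for the
   projection coefficient [s = <F,G> / |F|^2]. *)
Lemma minner_Cauchy_Schwarz_eq F G :
  F != 0 -> minner F G ^+ 2 = minner F F * minner G G ->
  G = (minner F G / minner F F) *: F.
Proof.
rewrite -minner_self_gt0 => /lt0r_neq0 nFF eq_CS.
have GG : minner G G = minner F G ^+ 2 / minner F F.
  by rewrite eq_CS mulrAC divff // mul1r.
set s := minner F G / minner F F.
have : minner F F * minner (s *: F - G) (s *: F - G) = 0.
  by rewrite minner_normZB GG /s; field.
by move=> /eqP; rewrite mulf_eq0 (negbTE nFF) minner_self_eq0 subr_eq0 => /eqP.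
Qed.

Lemma unitmx_neq0 F : F \in unitmx -> F != 0.
Proof. by apply: contraTneq => ->; rewrite unitmxE det0 unitr0. Qed.

Lemma det_gram_gt0 F : F \in unitmx -> 0 < \det (F *m F^T).
Proof.
rewrite unitmxE unitfE => detF_neq0.
by rewrite det_mulmx det_tr -expr2 lt_def sqr_ge0 sqrf_eq0 detF_neq0.
Qed.

Lemma unitmx_gram F : F \in unitmx -> F *m F^T \in unitmx.
Proof. by move=> uF; rewrite unitmx_mul uF unitmx_tr. Qed.

Lemma mxtrace_inv_gram F :
  F \in unitmx -> \tr (invmx (F *m F^T)) = minner (invmx F)^T (invmx F)^T.
Proof. by move=> uF; rewrite invmx_gram // /minner trmxK. Qed.

(* [<F, F^-T> = tr (F F^-1) = 3], so this is the equality case of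
   Cauchy-Schwarz for [F] and [F^-T]. *)
Lemma gram_trace_product_eq9 F : F \in unitmx ->
  \tr (F *m F^T) * \tr (invmx (F *m F^T)) = 9%:R <->
  exists t, 0 < t /\ F *m F^T = t%:M.
Proof.
move=> uF.
have FG3 : minner F (invmx F)^T = 3%:R by rewrite /minner trmxK mulmxV // mxtrace1.
split=> [| [t [t_gt0 ->]]]; last first.
  rewrite invmx_scalar !mxtrace_scalar.
  by rewrite mulrnAl mulrnAr -mulrnA divff ?gt_eqF // -natrM mulr1n.
rewrite mxtrace_inv_gram // => eq9.
have CS_eq : minner F (invmx F)^T ^+ 2 = minner F F * minner (invmx F)^T (invmx F)^T.
  by rewrite FG3 -[minner F F]/(\tr _) eq9 -natrX.
have := minner_Cauchy_Schwarz_eq (unitmx_neq0 uF) CS_eq; rewrite FG3 => G_prop.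
have FF_gt0 : 0 < minner F F by rewrite minner_self_gt0 unitmx_neq0.
have s_gt0 : 0 < 3%:R / minner F F by rewrite divr_gt0 ?ltr0n.
have sB1 : (3%:R / minner F F) *: (F *m F^T) = 1%:M.
  by rewrite scalemxAr -linearZ /= -G_prop trmxK mulmxV.
exists (3%:R / minner F F)^-1; split; first by rewrite invr_gt0.
by rewrite -scalemx1 -sB1 scalerA mulVf ?scale1r ?gt_eqF.
Qed.

Lemma cbrtK a : 0 <= a -> cbrt a ^+ 3 = a.
Proof. by move=> a_ge0; rewrite /cbrt; case: sig2W => y /= _; rewrite a_ge0 => /eqP. Qed.

Lemma cbrt_gt0 a : 0 < a -> 0 < cbrt a.
Proof.
move=> a_gt0; have := cbrtK (ltW a_gt0).
rewrite /cbrt; case: sig2W => y /= y_ge0 _ y3.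
by rewrite lt_def y_ge0 andbT; apply: contraTneq a_gt0 => y0; rewrite -y3 y0 expr0n ltxx.
Qed.

Lemma mxtrace_dev3 X : \tr (dev3 X) = 0.
Proof. by rewrite /dev3 linearB /= mxtraceZ mxtrace1 divfK ?subrr ?pnatr_eq0. Qed.

Lemma dev3D X G : dev3 (X + G) = dev3 X + dev3 G.
Proof. by rewrite /dev3 linearD /= mulrDl scalerDl addrACA opprD. Qed.

Lemma dev3Z a X : dev3 (a *: X) = a *: dev3 X.
Proof. by rewrite /dev3 mxtraceZ scalerBr scalerA mulrA. Qed.

Lemma dev3_scalar a : dev3 (a *: 1%:M) = 0.
Proof. by rewrite dev3Z /dev3 mxtrace1 divff ?scale1r ?subrr ?scaler0 ?pnatr_eq0. Qed.

Lemma dev3_kirchhoff (mu kappa : R) B :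
  dev3 (kirchhoff mu kappa B) = mu *: dev3 ((cbrt (\det B))^-1 *: B).
Proof.
rewrite /kirchhoff dev3D dev3_scalar addr0 dev3Z.
by rewrite {1}/dev3 mxtrace_dev3 mul0r scale0r subr0.
Qed.

Lemma mxtrace_cof B : \tr (cof B) = \det B * \tr (invmx B).
Proof. by rewrite /cof mxtraceZ mxtrace_tr. Qed.

Lemma minner_pullback1 F X : F \in unitmx ->
  minner (invmx F *m X *m (invmx F)^T) 1%:M = \tr (X *m invmx (F *m F^T)).
Proof.
by move=> uF; rewrite minner1r mxtrace_mulC mulmxA mxtrace_mulC invmx_gram // mulmxA.
Qed.

Lemma mxtrace_dev3_mul_inv B : B \in unitmx ->
  \tr (dev3 B *m invmx B) = 3%:R - \tr B * \tr (invmx B) / 3%:R.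
Proof.
move=> uB; rewrite /dev3 mulmxBl mulmxV // -scalemxAl mul1mx linearB /=.
by rewrite mxtraceZ mxtrace1 mulrAC.
Qed.

Lemma mxtrace_dev3_kirchhoff_inv (mu kappa : R) B : B \in unitmx ->
  \tr (dev3 (kirchhoff mu kappa B) *m invmx B)
  = mu / cbrt (\det B) * (3%:R - \tr B * \tr (invmx B) / 3%:R).
Proof.
move=> uB; rewrite dev3_kirchhoff !dev3Z -!scalemxAl !mxtraceZ.
by rewrite mxtrace_dev3_mul_inv // mulrA.
Qed.

Lemma mxtrace_dev3_kirchhoff_inv_eq0 (mu kappa : R) F : F \in unitmx -> mu != 0 ->
  \tr (dev3 (kirchhoff mu kappa (F *m F^T)) *m invmx (F *m F^T)) = 0 <->
  exists t, 0 < t /\ F *m F^T = t%:M.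
Proof.
move=> uF mu_neq0; have c_gt0 := cbrt_gt0 (det_gram_gt0 uF).
rewrite mxtrace_dev3_kirchhoff_inv ?unitmx_gram // -gram_trace_product_eq9 //.
set p := \tr _ * _; split=> [/eqP | ->]; last by field; rewrite gt_eqF.
rewrite !mulf_eq0 invr_eq0 (negbTE mu_neq0) gt_eqF //= subr_eq0 => /eqP p3.
by rewrite -[p](@divfK _ 3%:R) -?p3 -?natrM ?pnatr_eq0.
Qed.

Lemma SO3_orthogonal_det_gt0 Q : Q *m Q^T = 1%:M -> 0 < \det Q -> SO3 Q.
Proof.
move=> QQt detQ_gt0; split; first exact: mulmx1C.
have : \det Q ^+ 2 = 1 by rewrite expr2 -{2}det_tr -det_mulmx QQt det1.
move=> /eqP; rewrite sqrf_eq1 => /orP[/eqP // | /eqP detQN1].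
by move: detQ_gt0; rewrite detQN1 ltr0N1.
Qed.

Lemma gram_scalar_iff_scaled_rotation F : 0 < \det F ->
  (exists t, 0 < t /\ F *m F^T = t%:M) <->
  exists a Q, 0 < a /\ SO3 Q /\ F = a *: Q.
Proof.
move=> detF_gt0; split=> [[t [t_gt0 Bt]] | [a [Q [a_gt0 [[QtQ _] ->]]]]]; last first.
  exists (a ^+ 2); split; first by rewrite exprn_gt0.
  by rewrite linearZ /= -scalemxAl -scalemxAr (mulmx1C QtQ) scalerA -expr2 scalemx1.
set r := Num.sqrt t; have r_gt0 : 0 < r by rewrite sqrtr_gt0.
exists r, (r^-1 *: F); split => //; split; last by rewrite scalerA mulfV ?scale1r ?gt_eqF.
apply: SO3_orthogonal_det_gt0; last by rewrite detZ mulr_gt0 ?exprn_gt0 ?invr_gt0.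
rewrite linearZ /= -scalemxAl -scalemxAr Bt scalerA -expr2 exprVn sqr_sqrtr ?ltW //.
by rewrite scale_scalar_mx mulVf ?gt_eqF.
Qed.

Lemma mxtrace_pullback_mul_Cp F Fp X : F \in unitmx -> Fp \in unitmx ->
  \tr (invmx F *m X *m (invmx F)^T *m (Fp^T *m Fp))
  = \tr (X *m invmx ((F *m invmx Fp) *m (F *m invmx Fp)^T)).
Proof.
move=> uF uFp; rewrite invmx_gram ?unitmx_mul ?uF ?unitmx_inv //.
by rewrite invmxM ?unitmx_inv // invmxK trmx_mul -!mulmxA mxtrace_mulC !mulmxA.
Qed.

End Mat3.

Theorem mainTheorem15 (R : rcfType) (mu kappa : R) (hmu : 0 < mu) (hkappa : 0 < kappa) :
  (* the trace identity *)
  (forall Fe : 'M[R]_3, GLp Fe ->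
     let Be := Fe *m Fe^T in
     let taue := kirchhoff mu kappa Be in
     dev3 taue = mu *: dev3 ((cbrt (\det Be))^-1 *: Be) /\
     minner (invmx Fe *m dev3 taue *m (invmx Fe)^T) 1%:M
       = mu / (cbrt (\det Be)) ^+ 4
           * (3%:R * \det Be - 3%:R^-1 * \tr Be * \tr (cof Be)))
  /\
  (* vanishing characterisation *)
  (forall Fe : 'M[R]_3, GLp Fe ->
     let Be := Fe *m Fe^T in
     let taue := kirchhoff mu kappa Be in
     (minner (invmx Fe *m dev3 taue *m (invmx Fe)^T) 1%:M = 0
        <-> exists a : R, 0 < a /\ Be = a%:M) /\
     ((exists a : R, 0 < a /\ Be = a%:M)
        <-> exists (a : R) (Q : 'M[R]_3), 0 < a /\ SO3 Q /\ Fe = a *: Q))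
  /\
  (* consequence for the Simo-Hughes flow rule: the rate
     d/dt det(Cpbar^-1) = det(Cpbar^-1) <1, d/dt[Cpbar^-1] Cpbar> is nonzero
     whenever Be is not a positive multiple of the identity *)
  (forall (F Fp : 'M[R]_3) (lam : R), GLp F -> GLp Fp -> 0 < lam ->
     let Fe := F *m invmx Fp in
     let Be := Fe *m Fe^T in
     let taue := kirchhoff mu kappa Be in
     let Cp := Fp^T *m Fp in
     let Cpbar := (cbrt (\det Cp))^-1 *: Cp in
     let rate := (- (2%:R / 3%:R) * lam * \tr Be / mnorm (dev3 taue)) *:
                   (invmx F *m dev3 taue *m (invmx F)^T) in
     ~ (exists a : R, 0 < a /\ Be = a%:M) ->
     \det (invmx Cpbar) * minner 1%:M (rate *m Cpbar) <> 0).
Proof.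
have mu_neq0 : mu != 0 by rewrite gt_eqF.
split.
  move=> Fe [uFe _] Be taue; split; first exact: dev3_kirchhoff.
  have c_gt0 := cbrt_gt0 (det_gram_gt0 uFe).
  have det_cube : \det Be = cbrt (\det Be) ^+ 3.
    by rewrite cbrtK // ltW // det_gram_gt0.
  rewrite minner_pullback1 // mxtrace_dev3_kirchhoff_inv ?unitmx_gram // mxtrace_cof.
  move: c_gt0 det_cube; set c := cbrt _ => c_gt0 ->.
  by field; rewrite gt_eqF.
split=> [Fe GLFe Be taue|].
  split; last exact: gram_scalar_iff_scaled_rotation GLFe.2.
  by rewrite minner_pullback1 ?GLFe.1 //; apply: mxtrace_dev3_kirchhoff_inv_eq0 GLFe.1 _.
move=> F Fp lam [uF _] [uFp _] lam_gt0 Fe Be taue Cp Cpbar rate not_scalar.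
have uFe : Fe \in unitmx by rewrite unitmx_mul uF unitmx_inv.
have trD_neq0 : \tr (dev3 taue *m invmx Be) != 0.
  by apply/eqP => /(mxtrace_dev3_kirchhoff_inv_eq0 kappa uFe mu_neq0).
have D_neq0 : dev3 taue != 0.
  by apply: contraNneq trD_neq0 => ->; rewrite mul0mx mxtrace0.
have detCp_gt0 : 0 < \det Cp.
  by have := @det_gram_gt0 _ Fp^T; rewrite trmxK unitmx_tr; apply.
have cp_gt0 := cbrt_gt0 detCp_gt0.
have trBe_gt0 : 0 < \tr Be by rewrite minner_self_gt0 unitmx_neq0.
rewrite minner1l /rate /Cpbar -scalemxAl -scalemxAr !mxtraceZ mxtrace_pullback_mul_Cp //.
rewrite det_inv detZ; apply/eqP.
rewrite !mulf_neq0 ?invr_eq0 ?expf_neq0 ?oppr_eq0 ?pnatr_eq0 //.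
all: by rewrite ?mulf_neq0 ?expf_neq0 ?invr_eq0 ?pnatr_eq0 ?gt_eqF ?mnorm_gt0.
Qed.
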